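(* Let $c\ge2$ and let $Y\subseteq\Sigma^c$ be a zero-set with $|Y|=4$. Then $Y$ survives one round of tornado tabulation with probability $\left(3-2/|\Sigma|\right)/|\Sigma|$.
   Context: Let $\Sigma=\{0,\dots,2^k-1\}$, identified with $k$-bit strings, $\oplus$ bitwise xor. A simple tabulation hash function $g:\Sigma^b\to\Sigma$ is $g(x_1\cdots x_b)=T_1[x_1]\oplus\cdots\oplus T_b[x_b]$ with independent fully random tables $T_i:\Sigma\to\Sigma$. Let $\tilde h_1,\tilde h_2,\dots$ be mutually independent simple tabulation functions with $\tilde h_i:\Sigma^{c+i-1}\to\Sigma$. The simple derived key (with $d$ rounds) of $x=x_1\cdots x_c$ is $\tilde h'(x)=\tilde x_1\cdots\tilde x_{c+d}$ with $\tilde x_i=x_i$ for $i\le c$ and $\tilde x_i=\tilde h_{i-c}(\tilde x_1\cdots\tilde x_{i-1})$ for $c<i\le c+d$. A set $Y$ of keys in $\Sigma^b$ is a zero-set if for every position $i$ and every character $a$, the number of $y\in Y$ with $y_i=a$ is even. A zero-set $Y\subseteq\Sigma^c$ survives $d$ rounds of tornado tabulation if $\tilde h'(Y)\subseteq\Sigma^{c+d}$ is a zero-set; ''one round'' means $d=1$. *)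

From mathcomp Require Import all_boot all_order all_algebra.
Set Implicit Arguments. Unset Strict Implicit. Unset Printing Implicit Defensive.

Definition Sigma (k : nat) := {ffun 'I_k -> bool}.

Definition xorS (k : nat) (a b : Sigma k) : Sigma k := [ffun i => a i (+) b i].
Definition zeroS (k : nat) : Sigma k := [ffun => false].

Definition key (k b : nat) := {ffun 'I_b -> Sigma k}.

Definition tables (k b : nat) := {ffun 'I_b -> {ffun Sigma k -> Sigma k}}.

Definition simple_tab (k b : nat) (T : tables k b) (x : key k b) : Sigma k :=
  \big[@xorS k/zeroS k]_(i < b) T i (x i).

Definition zero_set (k b : nat) (Y : {set key k b}) : bool :=
  [forall i : 'I_b, forall a : Sigma k, ~~ odd #|[set y in Y | y i == a]|].

Definition derived1 (k c : nat) (T : tables k c) (x : key k c) : key k c.+1 :=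
  [ffun i : 'I_c.+1 => match unlift ord_max i with
                       | Some j => x j
                       | None => simple_tab T x
                       end].

Definition survives1 (k c : nat) (T : tables k c) (Y : {set key k c}) : bool :=
  zero_set [set derived1 T y | y in Y].

Definition prob_survives1 (k c : nat) (Y : {set key k c}) : rat :=
  (#|[set T : tables k c | survives1 T Y]|%:R / #|{: tables k c}|%:R)%R.

(* Since Y is a four-key zero-set, in every position its four characters pair
   up; hence for any tables the four hash values h(y1), ..., h(y4) xor to zero,
   and the derived keys form a zero-set iff these hash values pair up as well.
   With h(y4) = h(y1) + h(y2) + h(y3) this happens iff the pair
   (h(y1) + h(y2), h(y1) + h(y3)) lies on one of the lines u = 0, v = 0, u = v
   of Sigma^2, which together have 3|Sigma| - 2 points.  That pair is an
   additive function of the tables, and it is onto Sigma^2 because tables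
   supported on a single entry already move it along two independent
   directions; so it is uniformly distributed, and the survival probability is
   (3|Sigma| - 2) / |Sigma|^2. *)

From HB Require Import structures.
From mathcomp Require Import all_boot all_order all_algebra.
From mathcomp Require Import zify ring.
Set Implicit Arguments. Unset Strict Implicit. Unset Printing Implicit Defensive.
Import GRing.Theory Num.Theory.

(* MathComp does not join the finite and zmodule structures of these types. *)
HB.instance Definition _ (aT : finType) (rT : finZmodType) :=
  GRing.Zmodule.on {ffun aT -> rT}.
HB.instance Definition _ (U V : finZmodType) := GRing.Zmodule.on (U * V)%type.

Section SurjectiveMorphismCount.
Local Open Scope ring_scope.
Variables (U V : finZmodType) (f : U -> V).
Hypotheses (fD : {morph f : x y / x + y}) (f_surj : forall v, exists u, f u = v).

Lemma card_fiber_morph (v : V) : #|f @^-1: [set v]| = #|f @^-1: [set 0]|.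
Proof.
have [u0 <-] := f_surj v.
have fB u : f (u - u0) = f u - f u0 by apply: (addIr (f u0)); rewrite -fD !subrK.
have -> : f @^-1: [set f u0] = (+%R^~ u0) @: (f @^-1: [set 0]).
  apply/setP => u; rewrite !inE; apply/eqP/imsetP => [fu | [u' + ->]].
    by exists (u - u0); rewrite ?subrK // !inE fB fu subrr.
  by rewrite !inE fD => /eqP->; rewrite add0r.
by rewrite card_imset //; exact: addIr.
Qed.

Lemma card_preimset_morph (A : {set V}) : (#|f @^-1: A| * #|V| = #|A| * #|U|)%N.
Proof.
have card_preim (B : {set V}) : #|f @^-1: B| = (#|B| * #|f @^-1: [set 0%R]|)%N.
  rewrite -sum1_card (partition_big f (mem B)) /=; last by move=> u /[!inE].
  rewrite (eq_bigr (fun=> #|f @^-1: [set 0%R]|)) ?sum_nat_const // => v vB.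
  rewrite -(card_fiber_morph v) -sum1_card; apply: eq_bigl => u.
  by rewrite !inE andb_idl // => /eqP->.
have := card_preim setT; rewrite preimsetT !cardsT => ->.
by rewrite card_preim mulnAC mulnA.
Qed.

End SurjectiveMorphismCount.

Definition paired (T : eqType) (a1 a2 a3 a4 : T) :=
  [|| (a1 == a2) && (a3 == a4), (a1 == a3) && (a2 == a4) | (a1 == a4) && (a2 == a3)].

Lemma pairedP (T : eqType) (a1 a2 a3 a4 : T) :
  (forall a, ~~ odd (count_mem a [:: a1; a2; a3; a4])) <-> paired a1 a2 a3 a4.
Proof.
split=> [even_count | ]; last first.
  by case/or3P => /andP[/eqP-> /eqP->] a /=; case: (_ == a); case: (_ == a).
move: (even_count a1) (even_count a2) (even_count a3) (even_count a4) => /=.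
rewrite /paired; repeat (rewrite ?eqxx /=; match goal with
  |- context [?x == ?y] => case: (x =P y) => [?|?]; try subst end).
all: by rewrite ?eqxx.
Qed.

Lemma paired_map (T1 T2 : eqType) (f : T1 -> T2) a1 a2 a3 a4 :
  paired a1 a2 a3 a4 -> paired (f a1) (f a2) (f a3) (f a4).
Proof. by case/or3P => /andP[/eqP-> /eqP->]; rewrite /paired !eqxx ?orbT. Qed.

Lemma paired_neq (T : eqType) (a1 a2 a3 a4 : T) :
  paired a1 a2 a3 a4 -> a4 != a1 -> (a3 != a1) = ~~ (a2 != a1).
Proof.
by case/or3P => /andP[/eqP-> /eqP->]; rewrite ?eqxx // => neq; rewrite ?neq ?(negbTE neq).
Qed.

Lemma ffun_neq (aT : finType) (rT : eqType) (f g : {ffun aT -> rT}) :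
  f != g -> exists x, f x != g x.
Proof.
move=> fg; apply/existsP; apply: contraNT fg => /existsPn eq_fg.
by apply/eqP/ffunP => x; apply/eqP/negbNE/eq_fg.
Qed.

Definition axes_diag (T : finType) (z : T) : {set T * T} :=
  [set p | [|| p.1 == z, p.2 == z | p.1 == p.2]].

Lemma card_axes_diag (T : finType) (z : T) : (#|axes_diag z| + 2 = 3 * #|T|)%N.
Proof.
have -> : #|axes_diag z| = \sum_(x : T) \sum_(y | [|| x == z, y == z | x == y]) 1.
  by rewrite -sum1_card pair_big_dep; apply: eq_bigl => -[x y]; rewrite inE.
rewrite (bigD1 z) //= eqxx sum1_card.
rewrite (eq_bigr (fun=> 2)) => [|x /negbTE xz]; last first.
  rewrite xz sum1dep_card (_ : [set y | _] = [set z; x]) ?cards2 1?eq_sym ?xz //.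
  by apply/setP => y; rewrite !inE (eq_sym x).
rewrite sum_nat_const cardC1.
have : (0 < #|T|)%N by apply/card_gt0P; exists z.
by rewrite (eq_card (B := T)) //; lia.
Qed.

Section Lines.
Local Open Scope ring_scope.
Variable V : zmodType.

Definition line (a b : bool) (w : V) : V * V :=
  (if a then w else 0, if b then w else 0).

Variable P : V * V -> Prop.
Hypothesis P_sub : forall p q, P p -> P q -> P (p - q).

Lemma span_axes : (forall w, P (w, 0)) -> (forall w, P (0, w)) -> forall p, P p.
Proof.
move=> P1 P2 [u v].
have : P (u - 0, 0 - - v) := P_sub (P1 u) (P2 (- v)).
by rewrite subr0 sub0r opprK.
Qed.

Lemma span_lines a b c :
  (forall w, P (line true a w)) -> (forall w, P (line b true w)) ->
  (forall w, P (line c (~~ c) w)) -> forall p, P p.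
Proof.
rewrite /line => Pa Pb Pc; case: c Pc => /= Pc; apply: span_axes => // w.
  case: b Pb => // Pb.
  by have : P (w - w, w - 0) := P_sub (Pb w) (Pc w); rewrite subrr subr0.
case: a Pa => // Pa.
by have : P (w - 0, w - w) := P_sub (Pa w) (Pc w); rewrite subrr subr0.
Qed.

End Lines.

Section Tabulation.
Local Open Scope ring_scope.
Variable k : nat.
Implicit Types (a w : Sigma k).

Lemma oppS a : - a = a.
Proof. by apply/ffunP => i; rewrite !ffunE. Qed.

Lemma addSS a : a + a = 0.
Proof. by rewrite -{1}[a]oppS addNr. Qed.

Lemma addS_eq0 a w : (a + w == 0) = (a == w).
Proof. by rewrite -{1}[w]oppS subr_eq0. Qed.

Lemma paired_sum a1 a2 a3 a4 : paired a1 a2 a3 a4 -> a1 + a2 + a3 + a4 = 0.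
Proof.
by case/or3P => /andP[/eqP-> /eqP->]; rewrite -addrA ?(addrC a3 a4) !addSS ?addr0.
Qed.

Lemma paired_add3 a1 a2 a3 :
  paired a1 a2 a3 (a1 + a2 + a3) = ((a1 + a2, a1 + a3) \in axes_diag 0).
Proof.
rewrite inE /= !addS_eq0 (inj_eq (addrI a1)).
apply/idP/idP => [|/or3P[] /eqP e]; rewrite /paired.
  by case/or3P => /andP[e1 e2]; rewrite ?e1 ?e2 ?orbT.
- by rewrite -e addSS add0r !eqxx.
- by rewrite -e addrAC addSS add0r !eqxx orbT.
- by rewrite -e -addrA addSS addr0 !eqxx !orbT.
Qed.

(* [xorS] and [zeroS] are definitionally the addition and zero of [Sigma k]. *)
Lemma simple_tabE b (T : tables k b) x : simple_tab T x = \sum_(i < b) T i (x i).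
Proof. by []. Qed.

Lemma simple_tabD b (T S : tables k b) x :
  simple_tab (T + S) x = simple_tab T x + simple_tab S x.
Proof. by rewrite !simple_tabE -big_split; apply: eq_bigr => i _; rewrite !ffunE. Qed.

Definition delta_tables b (i : 'I_b) a w : tables k b :=
  [ffun j => [ffun x => if (j == i) && (x == a) then w else 0]].

Lemma simple_tab_delta b (i : 'I_b) a w y :
  simple_tab (delta_tables i a w) y = if y i == a then w else 0.
Proof.
rewrite !simple_tabE (bigD1 i) //= big1 => [|j /negbTE ji]; last by rewrite !ffunE ji.
by rewrite !ffunE eqxx addr0.
Qed.

Lemma simple_tab_paired_sum b (T : tables k b) (y1 y2 y3 y4 : key k b) :
  (forall i, paired (y1 i) (y2 i) (y3 i) (y4 i)) ->
  simple_tab T y1 + simple_tab T y2 + simple_tab T y3 + simple_tab T y4 = 0.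
Proof.
move=> cols; rewrite !simple_tabE -!big_split /=; apply: big1 => i _.
exact/paired_sum/paired_map.
Qed.

Lemma zero_set_seqP b (Y : {set key k b}) (s : seq (key k b)) :
  uniq s -> Y =i s ->
  zero_set Y <->
    forall (i : 'I_b) a, ~~ odd (count_mem a [seq y i | y : key k b <- s]).
Proof.
move=> s_uniq Ys.
have card_col (i : 'I_b) a :
    #|[set y in Y | y i == a]| = count_mem a [seq y i | y : key k b <- s].
  rewrite count_map -size_filter -(card_uniqP (filter_uniq _ s_uniq)).
  by apply: eq_card => y; rewrite !inE mem_filter Ys andbC.
split=> [/forallP zY i a | zY].
  by move/forallP: (zY i) => /(_ a); rewrite card_col.
by apply/forallP => i; apply/forallP => a; rewrite card_col.
Qed.

Lemma zero_set4P b (Y : {set key k b}) y1 y2 y3 y4 :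
  uniq [:: y1; y2; y3; y4] -> Y =i [:: y1; y2; y3; y4] ->
  zero_set Y <-> forall i, paired (y1 i) (y2 i) (y3 i) (y4 i).
Proof.
move=> Y_uniq Y4; rewrite (zero_set_seqP Y_uniq Y4).
by split=> cols i; apply/pairedP; exact: cols.
Qed.

Lemma derived1_lift c (T : tables k c) x j : derived1 T x (lift ord_max j) = x j.
Proof. by rewrite ffunE liftK. Qed.

Lemma derived1_max c (T : tables k c) x : derived1 T x ord_max = simple_tab T x.
Proof. by rewrite ffunE unlift_none. Qed.

Lemma derived1_inj c (T : tables k c) : injective (derived1 T).
Proof.
by move=> x y /ffunP xy; apply/ffunP => j; rewrite -!(derived1_lift T) xy.
Qed.

Lemma survives1_paired c (T : tables k c) (Y : {set key k c}) y1 y2 y3 y4 :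
  uniq [:: y1; y2; y3; y4] -> Y =i [:: y1; y2; y3; y4] -> zero_set Y ->
  survives1 T Y =
    paired (simple_tab T y1) (simple_tab T y2) (simple_tab T y3) (simple_tab T y4).
Proof.
move=> Y_uniq Y4 /(zero_set4P Y_uniq Y4) cols; set f := derived1 T.
have fY_uniq : uniq (map f [:: y1; y2; y3; y4]).
  by rewrite (map_inj_uniq (@derived1_inj c T)).
have fY4 : f @: Y =i map f [:: y1; y2; y3; y4].
  by move=> z; apply/imsetP/mapP => -[y yY ->]; exists y; rewrite ?Y4 // -Y4.
rewrite /survives1 -!(derived1_max T).
apply/idP/idP => [/(zero_set4P fY_uniq fY4)/(_ ord_max) // | last_col].
apply/(zero_set4P fY_uniq fY4) => i.
by case: (unliftP ord_max i) => [j ->|->] //; rewrite !derived1_lift.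
Qed.

Definition hash_diffs b (y1 y2 y3 : key k b) (T : tables k b) : Sigma k * Sigma k :=
  (simple_tab T y1 + simple_tab T y2, simple_tab T y1 + simple_tab T y3).

Lemma hash_diffsD b (y1 y2 y3 : key k b) : {morph hash_diffs y1 y2 y3 : T S / T + S}.
Proof.
by move=> T S; rewrite /hash_diffs !simple_tabD; congr pair; rewrite addrACA.
Qed.

Lemma hash_diffs_delta b (y1 y2 y3 : key k b) i w :
  hash_diffs y1 y2 y3 (delta_tables i (y1 i) w) = line (y2 i != y1 i) (y3 i != y1 i) w.
Proof.
rewrite /hash_diffs /line !simple_tab_delta eqxx.
by case: (y2 i == y1 i); case: (y3 i == y1 i); rewrite ?addSS ?addr0.
Qed.

Lemma hash_diffs_surj b (y1 y2 y3 y4 : key k b) :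
  (forall i, paired (y1 i) (y2 i) (y3 i) (y4 i)) ->
  y2 != y1 -> y3 != y1 -> y4 != y1 ->
  forall p, exists T, hash_diffs y1 y2 y3 T = p.
Proof.
move=> cols n21 n31 n41.
have [i2 n21_at] := ffun_neq n21.
have [i3 n31_at] := ffun_neq n31.
have [i4 n41_at] := ffun_neq n41.
pose P p := exists T, hash_diffs y1 y2 y3 T = p.
have P_line i w : P (line (y2 i != y1 i) (y3 i != y1 i) w).
  by exists (delta_tables i (y1 i) w); exact: hash_diffs_delta.
apply: (@span_lines _ P _ (y3 i2 != y1 i2) (y2 i3 != y1 i3) (y2 i4 != y1 i4)).
- move=> _ _ [T <-] [S <-]; exists (T - S).
  by apply: (addIr (hash_diffs y1 y2 y3 S)); rewrite -hash_diffsD !subrK.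
- by move=> w; have := P_line i2 w; rewrite n21_at.
- by move=> w; have := P_line i3 w; rewrite n31_at.
- by move=> w; have := P_line i4 w; rewrite (paired_neq (cols i4) n41_at).
Qed.

Lemma survives1_hash_diffs c (T : tables k c) (Y : {set key k c}) y1 y2 y3 y4 :
  uniq [:: y1; y2; y3; y4] -> Y =i [:: y1; y2; y3; y4] -> zero_set Y ->
  survives1 T Y = (hash_diffs y1 y2 y3 T \in axes_diag 0).
Proof.
move=> Y_uniq Y4 zY; rewrite (survives1_paired T Y_uniq Y4 zY).
have /eqP := simple_tab_paired_sum T ((zero_set4P Y_uniq Y4).1 zY).
by rewrite addS_eq0 => /eqP <-; exact: paired_add3.
Qed.

End Tabulation.

Lemma card4_enum (T : finType) (Y : {set T}) :
  #|Y| = 4 -> exists y1 y2 y3 y4,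
    uniq [:: y1; y2; y3; y4] /\ Y =i [:: y1; y2; y3; y4].
Proof.
move=> cardY; have := enum_uniq (mem Y); have := mem_enum (mem Y).
move: (cardE Y); rewrite cardY.
case: (enum Y) => [|y1 [|y2 [|y3 [|y4 []]]]] // _ Y4 Y_uniq.
by exists y1, y2, y3, y4; split=> // y; rewrite -Y4.
Qed.

Lemma count_ratio (S g n N : nat) :
  (g + 2 = 3 * n)%N -> (S * (n * n) = g * N)%N -> (0 < N)%N ->
  (S%:R / N%:R = (3 - 2 / n%:R) / n%:R :> rat)%R.
Proof.
move=> g_eq SnnN N_gt0; have n_gt0 : (0 < n)%N by lia.
have nn_neq0 : ((n * n)%:R != 0 :> rat)%R by rewrite pnatr_eq0 -lt0n muln_gt0 n_gt0.
have g_rat : (g%:R = 3 * n%:R - 2 :> rat)%R.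
  by rewrite -[(g%:R)%R](addrK 2%:R%R) -natrD g_eq natrM.
have -> : (S%:R = (g * N)%:R / (n * n)%:R :> rat)%R by rewrite -SnnN natrM mulfK.
rewrite !natrM g_rat; field.
by rewrite !pnatr_eq0 -!lt0n n_gt0 N_gt0.
Qed.

Theorem lemma8p1 (k c : nat) (Y : {set key k c}) :
  2 <= c -> zero_set Y -> #|Y| = 4 ->
  prob_survives1 Y =
    ((3 - 2 / (#|{: Sigma k}|%:R : rat)) / #|{: Sigma k}|%:R)%R.
Proof.
move=> _ zY /card4_enum[y1 [y2 [y3 [y4 [Y_uniq Y4]]]]].
have cols := (zero_set4P Y_uniq Y4).1 zY.
have [n21 n31 n41] : [/\ y2 != y1, y3 != y1 & y4 != y1].
  move: Y_uniq; rewrite /= !inE !negb_or => /andP[/and3P[n12 n13 n14] _].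
  by split; rewrite eq_sym.
have surv : [set T | survives1 T Y] = hash_diffs y1 y2 y3 @^-1: axes_diag 0%R.
  by apply/setP => T; rewrite inE (survives1_hash_diffs T Y_uniq Y4 zY) !inE.
have := card_preimset_morph (hash_diffsD y1 y2 y3)
  (hash_diffs_surj cols n21 n31 n41) (axes_diag 0%R).
rewrite -surv card_prod => card_surv.
apply: (count_ratio (card_axes_diag 0%R) card_surv).
by apply/card_gt0P; exists 0%R.
Qed.
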